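(* Let $X$ be a metric continuum with metric $\rho\le 1$, and let $a,b,c\subset X$ be nonempty closed sets with $a\cap b\cap c=\emptyset$. Define $f:X\to\mathbb{R}^3$ by $f(p)=(\kappa_a(p),\kappa_b(p),\kappa_c(p))$ with $\kappa_a(p)=\rho(p,a)/(\rho(p,a)+\rho(p,b)+\rho(p,c))$ and $\kappa_b,\kappa_c$ analogous. Let $T=\{(t_1,t_2,t_3):t_i\ge0,\ t_1+t_2+t_3=1\}$, $\partial T$ its boundary (relative to the plane $t_1+t_2+t_3=1$), and $h:\partial T\times[0,1]\to T$, $h(v,t)=(1-t)v+t(\tfrac13,\tfrac13,\tfrac13)$. Let $X'=\{(p,v,t)\in X\times\partial T\times[0,1]: h(v,t)=f(p)\}$ and $q:X'\to X$, $q(p,v,t)=p$. Let $A$, $B$, $C$ be the sides of $T$ opposite to $(1,0,0)$, $(0,1,0)$, $(0,0,1)$ respectively, and put $x=X'\cap(X\times A\times[0,1])$, $y=X'\cap(X\times B\times[0,1])$, $z=X'\cap(X\times C\times[0,1])$. Then $X'$ is a metric continuum, $q$ is a continuous closed monotone surjection (all fibres are connected), and $q^{-1}(a)\subset x$, $q^{-1}(b)\subset y$, $q^{-1}(c)\subset z$, $x\cap y\cap z=\emptyset$ and $x\cup y\cup z=X'$.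
   Context: A metric continuum is a compact connected metric space. $\rho(p,a)$ denotes the distance from the point $p$ to the set $a$. A map is monotone if all its point-inverses are connected. *)

From HB Require Import structures.
From mathcomp Require Import all_boot all_order all_algebra.
From mathcomp Require Import all_classical all_reals all_analysis.
Set Implicit Arguments. Unset Strict Implicit. Unset Printing Implicit Defensive.
Import Order.TTheory GRing.Theory Num.Theory.
Import numFieldNormedType.Exports.
Local Open Scope classical_set_scope.
Local Open Scope ring_scope.

Section Defs.
Variable R : realType.

Definition rho (X : metricType R) (p : X) (a : set X) : R :=
  inf [set mdist p y | y in a].

Definition kappa (X : metricType R) (a b c : set X) (p : X) : R :=
  rho p a / (rho p a + rho p b + rho p c).

Definition fmap (X : metricType R) (a b c : set X) (p : X) : 'rV[R]_3 :=
  \row_(i < 3) (if val i == 0%N then kappa a b c p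
                else if val i == 1%N then kappa b c a p
                else kappa c a b p).

Definition plane3 : set 'rV[R]_3 := [set v | \sum_(i < 3) v ord0 i = 1].

Definition simplexT : set 'rV[R]_3 :=
  [set v | (forall i, 0 <= v ord0 i) /\ \sum_(i < 3) v ord0 i = 1].

Definition rel_interior (P S : set 'rV[R]_3) : set 'rV[R]_3 :=
  [set v | P v /\ exists2 e : R, 0 < e & forall w, P w -> ball v e w -> S w].

Definition rel_boundary (P S : set 'rV[R]_3) : set 'rV[R]_3 :=
  [set v | P v /\ closure S v /\ ~ rel_interior P S v].

Definition bdT : set 'rV[R]_3 := rel_boundary plane3 simplexT.

Definition unit_interval : set R := [set t | 0 <= t <= 1].

Definition hmap (v : 'rV[R]_3) (t : R) : 'rV[R]_3 :=
  (1 - t) *: v + t *: const_mx (3%:R^-1).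

Definition side (i : 'I_3) : set 'rV[R]_3 := [set v | simplexT v /\ v ord0 i = 0].

Definition Xprime (X : metricType R) (a b c : set X) : set (X * ('rV[R]_3 * R)) :=
  [set w | bdT w.2.1 /\ unit_interval w.2.2 /\ hmap w.2.1 w.2.2 = fmap a b c w.1].

Definition Xside (X : metricType R) (a b c : set X) (i : 'I_3)
  : set (X * ('rV[R]_3 * R)) :=
  Xprime a b c `&` [set w | side i w.2.1].

End Defs.

(* For [v] on the boundary of [T] some coordinate of [v] vanishes, so [t/3] is
   the least coordinate of [h(v,t)]: [h(v,t)] determines [t], and also [v] when
   [t < 1], while [h(v,1)] is the barycentre for every [v].  Hence a fibre of [q]
   is a point, or a copy of the circle [∂T] over the points [p] with [f(p)] the
   barycentre, so [q] is monotone; it is closed because [X'] is compact, and a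
   closed monotone surjection onto a connected space has a connected domain.
   For [p] in [a] the first coordinate of [f(p)] vanishes, which forces [t = 0]
   and [v] in the side [A]. *)

From Pilot Require Import Defs.
From HB Require Import structures.
From mathcomp Require Import all_boot all_order all_algebra.
From mathcomp Require Import all_classical all_reals all_analysis.
From mathcomp Require Import ring lra.
Import Order.TTheory GRing.Theory Num.Theory.
Import Pilot.Defs.
Import numFieldNormedType.Exports.
Import Num.Def.

Local Open Scope classical_set_scope.
Local Open Scope ring_scope.

Lemma fst_continuous (T U : topologicalType) : continuous (@fst T U).
Proof. by move=> x; apply: cvg_fst. Qed.
Arguments fst_continuous {T U}.

Lemma snd_continuous (T U : topologicalType) : continuous (@snd T U).
Proof. by move=> x; apply: cvg_snd. Qed.
Arguments snd_continuous {T U}.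

Lemma continuous_pair (T U V : topologicalType) (f : T -> U) (g : T -> V) :
  continuous f -> continuous g -> continuous (fun x => (f x, g x)).
Proof. by move=> f_cont g_cont x; apply: cvg_pair; [exact: f_cont|exact: g_cont]. Qed.

Lemma closed_preimage {T U : topologicalType} {f : T -> U} {D : set U} :
  continuous f -> closed D -> closed (f @^-1` D).
Proof. by move=> f_cont; apply: preimage_closed => x _; apply: f_cont. Qed.

Lemma closed_image_compact {T U : topologicalType} {A : set T} {f : T -> U} :
  hausdorff_space U -> compact A -> continuous f ->
  forall G, closed G -> closed (f @` (A `&` G)).
Proof.
move=> U_hausdorff A_compact f_cont G G_closed.
apply: compact_closed U_hausdorff _; apply: continuous_compact.
  exact: continuous_subspaceT.
exact: compact_closedI A_compact G_closed.
Qed.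

(* The images of the two halves of a separation of [A] are closed (each half is
   the trace on [A] of its closure), disjoint (a connected fibre lies in one half)
   and cover [U]. *)
Lemma closed_monotone_connected (T U : topologicalType) (A : set T) (f : T -> U) :
  (forall G, closed G -> closed (f @` (A `&` G))) -> f @` A = setT ->
  connected [set: U] -> (forall u, connected (A `&` f @^-1` [set u])) ->
  connected A.
Proof.
move=> f_closed f_surj U_conn fibre_conn.
apply: contrapT => /connectedPn [E [E_ne AE [sep01 sep10]]].
have sepE : separated (E false) (E true) by [].
have E_disj := separated_disjoint sepE.
have E_trace b : E b = A `&` closure (E b).
  apply/seteqP; split=> [x Ex|x [Ax clx]].
    by split; [rewrite AE; case: b Ex; [right|left]|exact: subset_closure].
  move: Ax; rewrite AE; case: b clx => clx [] // Ex.
  - by have : (E false `&` closure (E true)) x by []; rewrite sep10.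
  - by have : (closure (E false) `&` E true) x by []; rewrite sep01.
have fE_closed b : closed (f @` E b).
  by rewrite E_trace; apply/f_closed/closed_closure.
have fE_disj : f @` E false `&` f @` E true = set0.
  apply/seteqP; split=> // _ [[x0 E0x0 <-] [x1 E1x1 fx10]].
  have fibre_sub : A `&` f @^-1` [set f x0] `<=` E false `|` E true.
    by move=> x [Ax _]; rewrite -AE.
  have x0_fibre : (A `&` f @^-1` [set f x0]) x0.
    by split; [rewrite AE; left|].
  have x1_fibre : (A `&` f @^-1` [set f x0]) x1.
    by split; [rewrite AE; right|].
  case: (connected_subset sepE fibre_sub (fibre_conn (f x0))) => sub.
  - suff : (E false `&` E true) x1 by rewrite E_disj.
    by split=> //; apply: sub x1_fibre.
  - suff : (E false `&` E true) x0 by rewrite E_disj.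
    by split=> //; apply: sub x0_fibre.
suff : ~ connected [set: U] by []; apply/connectedPn; exists (fun b => f @` E b); split.
- by move=> b; have [x Ex] := E_ne b; exists (f x), x.
- by rewrite -f_surj AE image_setU.
- by rewrite /separated -!(closure_id _).1 //; split=> //; rewrite setIC.
Qed.

Lemma ord3P (i : 'I_3) : i = ord0 \/ i = lift ord0 ord0 \/ i = ord_max.
Proof.
case: i => [[|[|[|k]]] lt_i3] //.
- by left; apply: val_inj.
- by right; left; apply: val_inj.
- by right; right; apply: val_inj.
Qed.

Lemma sum_ord3 (V : nmodType) (F : 'I_3 -> V) :
  \sum_(i < 3) F i = F ord0 + F (lift ord0 ord0) + F ord_max.
Proof.
by rewrite !big_ord_recl big_ord0 addr0 addrA; congr (_ + _ + F _); apply: val_inj.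
Qed.

Lemma ball_rowP {K : realFieldType} {n} {v w : 'rV[K]_n} {e : K} : 0 < e ->
  ball v e w <-> forall i, `|v ord0 i - w ord0 i| < e.
Proof.
move=> e_gt0; rewrite mx_norm_ball /ball_ /=.
have -> : `|v - w| = mx_norm (v - w) by [].
rewrite mx_normrE; split=> [/bigmax_ltP [_ lt_e] i|lt_e].
  by have := lt_e (ord0, i) isT; rewrite !mxE.
by apply/bigmax_ltP; split=> // -[i j] _ /=; rewrite (ord1 i) !mxE.
Qed.

Section DistanceToSet.
Context {R : realType} {X : metricType R}.
Implicit Types (p q : X) (a : set X).

Lemma rho_ge0 p a : 0 <= rho p a.
Proof.
have [[y ay]|a0] := pselect (a !=set0); last first.
  have -> : a = set0 by apply/seteqP; split=> // y ay; apply: a0; exists y.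
  by rewrite /rho image_set0 inf0.
apply: lb_le_inf; first by exists (mdist p y), y.
by move=> _ [z _ <-]; apply: mdist_ge0.
Qed.

Lemma rho_le p {a y} : a y -> rho p a <= mdist p y.
Proof.
move=> ay; apply: ge_inf; last by exists y.
by exists 0 => _ [z _ <-]; apply: mdist_ge0.
Qed.

Lemma rho_le_mdistD p q {a} : a !=set0 -> rho p a <= mdist p q + rho q a.
Proof.
move=> [y ay]; rewrite -lerBlDl; apply: lb_le_inf; first by exists (mdist q y), y.
move=> _ [z az <-]; rewrite lerBlDl.
exact: le_trans (rho_le p az) (metric_triangle _ _ _).
Qed.

Lemma rho_lipschitz p q {a} : a !=set0 -> `|rho p a - rho q a| <= mdist p q.
Proof.
move=> a0; rewrite ler_norml; apply/andP; split.
  by have := rho_le_mdistD q p a0; rewrite metric_sym; lra.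
by have := rho_le_mdistD p q a0; lra.
Qed.

Lemma rho_continuous a : a !=set0 -> continuous (fun p => rho p a).
Proof.
move=> a0 p; apply/cvgrPdist_lt => e e_gt0.
apply: filterS (nbhsx_ballx p e e_gt0) => q; rewrite ballEmdist /=.
exact: le_lt_trans (rho_lipschitz p q a0).
Qed.

Lemma rho_eq0 p a : closed a -> a !=set0 -> rho p a = 0 <-> a p.
Proof.
move=> a_closed a0; split=> [rho0|ap]; last first.
  by apply/eqP; rewrite eq_le rho_ge0 andbT; have := rho_le p ap; rewrite mdistxx.
rewrite (closure_id a).1 // => B /nbhs_ballP [e e_gt0 eB].
have : inf [set mdist p y | y in a] < e by rewrite -/(rho p a) rho0.
move=> /(inf_lt (image_nonempty _ a0)) [_ [y ay <-] lt_e].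
by exists y; split=> //; apply: eB; rewrite ballEmdist.
Qed.

End DistanceToSet.

Section Simplex.
Context {R : realType}.
Implicit Types (v w s : 'rV[R]_3) (t : R) (i j k : 'I_3).

Lemma coord_rV3_continuous i : continuous (fun v : 'rV[R]_3 => v ord0 i).
Proof. exact: coord_continuous. Qed.

Lemma closed_simplexT : closed (@simplexT R).
Proof.
have -> : @simplexT R =
    (\bigcap_(i : 'I_3) [set v : 'rV[R]_3 | 0 <= v ord0 i]) `&` @plane3 R.
  apply/seteqP; split=> v [v_ge0 v_sum]; split=> //.
    by move=> i _; apply: v_ge0.
  by move=> i; apply: v_ge0.
have sum_continuous : continuous (fun v : 'rV[R]_3 => \sum_(i < 3) v ord0 i).
  move=> v; have coord_v i : {for v, continuous (fun w : 'rV[R]_3 => w ord0 i)}.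
    exact: coord_rV3_continuous.
  under eq_fun do rewrite sum_ord3.
  exact: cvgD (cvgD (coord_v _) (coord_v _)) (coord_v _).
apply: closedI; last exact: closed_preimage sum_continuous (@closed_eq _ 1).
apply: closed_bigI => i _.
exact: closed_preimage (coord_rV3_continuous i) (@closed_ge _ 0).
Qed.

Lemma simplexT_le1 v i : simplexT v -> v ord0 i <= 1.
Proof.
move=> [v_ge0 <-]; rewrite (bigD1 i) //= lerDl.
by apply: sumr_ge0 => j _; apply: v_ge0.
Qed.

Lemma rel_interior_simplexT v : simplexT v -> (forall i, 0 < v ord0 i) ->
  rel_interior (@plane3 R) (@simplexT R) v.
Proof.
move=> [v_ge0 v_sum] v_gt0; split=> //.
pose m := minr (v ord0 ord0) (minr (v ord0 (lift ord0 ord0)) (v ord0 ord_max)).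
have m_gt0 : 0 < m by rewrite !lt_min !v_gt0.
exists m => // w w_sum /(ball_rowP m_gt0) near_v; split=> // i.
have m_le : m <= v ord0 i.
  by case: (ord3P i) => [->|[->|->]]; rewrite !ge_min lexx ?orbT.
by have := ltr_normlW (near_v i); lra.
Qed.

(* Moving mass [e/2] out of the vanishing coordinate stays in the plane and in the
   ball, but makes that coordinate negative. *)
Lemma zero_coord_not_rel_interior v i : v ord0 i = 0 ->
  ~ rel_interior (@plane3 R) (@simplexT R) v.
Proof.
move=> vi0 [v_sum [e e_gt0 near_v_simplex]].
pose g k : R := if k == i then - (e / 2) else e / 4.
pose w : 'rV[R]_3 := \row_k (v ord0 k + g k).
have g_sum : \sum_k g k = 0.
  rewrite (bigD1 i) //= /g eqxx (eq_bigr (fun=> e / 4)); last by move=> k /negbTE ->.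
  by rewrite sumr_const cardC1 card_ord /= mulr2n; lra.
have w_sum : plane3 w.
  rewrite /plane3 /= (eq_bigr (fun k => v ord0 k + g k)); last by move=> k _; rewrite mxE.
  by rewrite big_split /= g_sum addr0.
have w_near : ball v e w.
  apply/(ball_rowP e_gt0) => k; rewrite mxE opprD addrA subrr add0r normrN /g.
  by case: (k == i); rewrite ?normrN gtr0_norm; lra.
have [w_ge0 _] := near_v_simplex w w_sum w_near.
by have := w_ge0 i; rewrite mxE vi0 add0r /g eqxx; lra.
Qed.

Lemma bdTE : @bdT R = [set v | simplexT v /\ exists i, v ord0 i = 0].
Proof.
apply/seteqP; split=> v.
- case=> _ [v_cl v_not_int].
  have v_simplex : simplexT v.
    by move: v_cl; rewrite -(closure_id _).1 //; exact: closed_simplexT.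
  split=> //; apply: contrapT => no_zero; apply: v_not_int.
  apply: rel_interior_simplexT => // i; rewrite lt_neqAle eq_sym v_simplex.1 andbT.
  by apply/eqP => vi0; apply: no_zero; exists i.
- case=> v_simplex [i vi0]; split; first by case: v_simplex.
  by split; [exact: subset_closure|exact: zero_coord_not_rel_interior vi0].
Qed.

Lemma bdT_sides : @bdT R = side ord0 `|` side (lift ord0 ord0) `|` side ord_max.
Proof.
rewrite bdTE; apply/seteqP; split=> v /=.
  by move=> [v_simplex [i vi0]]; case: (ord3P i) vi0 => [->|[->|->]] vi0;
    [left; left|left; right|right].
by move=> [[[v_simplex vi0]|[v_simplex vi0]]|[v_simplex vi0]]; split=> //; eexists; exact: vi0.
Qed.

Lemma sides_disjoint :
  side ord0 `&` side (lift ord0 ord0) `&` side ord_max = set0 :> set 'rV[R]_3.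
Proof.
apply/seteqP; split=> // v [[[[_ v_sum] v0] [_ v1]] [_ v2]].
by move: v_sum; rewrite sum_ord3 v0 v1 v2 !addr0 => /eqP; rewrite eq_sym oner_eq0.
Qed.

Definition vertex i : 'rV[R]_3 := \row_l (l == i)%:R.

Definition edge j k (t : R) : 'rV[R]_3 := t *: vertex j + (1 - t) *: vertex k.

Lemma edge1 j k : edge j k 1 = vertex j.
Proof. by rewrite /edge scale1r subrr scale0r addr0. Qed.

Lemma edge0 j k : edge j k 0 = vertex k.
Proof. by rewrite /edge scale0r add0r subr0 scale1r. Qed.

Lemma edge_continuous j k : continuous (edge j k).
Proof.
move=> t; apply: cvgD; first by apply: cvgZ; [exact: cvg_id|exact: cvg_cst].
by apply: cvgZ; [apply: cvgB; [exact: cvg_cst|exact: cvg_id]|exact: cvg_cst].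
Qed.

Lemma sideE i j k : i != j -> i != k -> j != k ->
  (forall l, l = i \/ l = j \/ l = k) ->
  side i = edge j k @` `[0, 1]%classic.
Proof.
move=> ij ik jk ijk.
have sum_ijk (u : 'rV[R]_3) : \sum_l u ord0 l = u ord0 i + u ord0 j + u ord0 k.
  rewrite (bigD1 i) // (bigD1 j) /=; last by rewrite eq_sym.
  rewrite (bigD1 k) /=; last by rewrite eq_sym ik eq_sym jk.
  rewrite !addrA big1 ?addr0 // => l /andP [/andP [li lj] lk].
  by case: (ijk l) li lj lk => [->|[->|->]]; rewrite eqxx ?andbF.
have edgeE t l : edge j k t ord0 l = t * (l == j)%:R + (1 - t) * (l == k)%:R.
  by rewrite !mxE.
apply/seteqP; split=> v.
- move=> [[v_ge0 v_sum] vi0]; exists (v ord0 j).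
    by rewrite set_itvcc /= v_ge0 simplexT_le1.
  rewrite sum_ijk vi0 add0r in v_sum.
  apply/rowP => l; rewrite (ord1 ord0) edgeE.
  case: (ijk l) => [->|[->|->]].
  - by rewrite (negbTE ij) (negbTE ik) vi0 /=; lra.
  - by rewrite eqxx (negbTE jk) /=; lra.
  - by rewrite eqxx eq_sym (negbTE jk) /=; lra.
- move=> [t]; rewrite set_itvcc /= => /andP [t_ge0 t_le1] <-.
  split; last by rewrite edgeE (negbTE ij) (negbTE ik) /=; lra.
  split=> [l|].
    by rewrite edgeE; apply: addr_ge0; apply: mulr_ge0; rewrite ?ler0n ?subr_ge0.
  rewrite sum_ijk !edgeE (negbTE ij) (negbTE ik) eqxx (negbTE jk) eq_sym (negbTE jk) eqxx /=.
  lra.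
Qed.

Lemma side0E : side ord0 = edge (lift ord0 ord0) ord_max @` `[0, 1]%classic.
Proof. by apply: sideE => // l; case: (ord3P l) => [->|[->|->]]; auto. Qed.

Lemma side1E : side (lift ord0 ord0) = edge ord_max ord0 @` `[0, 1]%classic.
Proof. by apply: sideE => // l; case: (ord3P l) => [->|[->|->]]; auto. Qed.

Lemma side2E : side ord_max = edge ord0 (lift ord0 ord0) @` `[0, 1]%classic.
Proof. by apply: sideE => // l; case: (ord3P l) => [->|[->|->]]; auto. Qed.

Lemma compact_edge j k : compact (edge j k @` `[0, 1]%classic).
Proof.
apply: continuous_compact; last exact: segment_compact.
by apply: continuous_subspaceT; apply: edge_continuous.
Qed.

Lemma connected_edge j k : connected (edge j k @` `[0, 1]%classic).
Proof.
apply: connected_continuous_connected; first exact: segment_connected.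
by apply: continuous_subspaceT; apply: edge_continuous.
Qed.

Lemma compact_bdT : compact (@bdT R).
Proof.
rewrite bdT_sides side0E side1E side2E.
exact (compactU (compactU (@compact_edge _ _) (@compact_edge _ _)) (@compact_edge _ _)).
Qed.

Lemma closed_bdT : closed (@bdT R).
Proof. exact: compact_closed (@norm_hausdorff _ _) compact_bdT. Qed.

Lemma connected_bdT : connected (@bdT R).
Proof.
rewrite bdT_sides side0E side1E side2E.
have in0 : `[0, 1]%classic (0 : R) by rewrite set_itvcc /= lexx ler01.
have in1 : `[0, 1]%classic (1 : R) by rewrite set_itvcc /= lexx ler01.
apply: connectedU; last exact: connected_edge.
  exists (vertex (lift ord0 ord0)); split; first by left; exists 1; rewrite ?edge1.
  by exists 0; rewrite ?edge0.
apply: connectedU; try exact: connected_edge.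
by exists (vertex ord_max); split; [exists 0; rewrite ?edge0|exists 1; rewrite ?edge1].
Qed.

Lemma hmapE v t i : hmap v t ord0 i = (1 - t) * v ord0 i + t / 3%:R.
Proof. by rewrite !mxE. Qed.

Lemma hmap1 v : hmap v 1 = const_mx 3%:R^-1.
Proof. by rewrite /hmap subrr scale0r add0r scale1r. Qed.

Lemma hmap_min_coord {v t} : bdT v -> t <= 1 ->
  (forall i, t / 3%:R <= hmap v t ord0 i) /\ exists i, hmap v t ord0 i = t / 3%:R.
Proof.
rewrite bdTE => -[[v_ge0 _] [i vi0]] t_le1; split.
  by move=> j; rewrite hmapE lerDr mulr_ge0 // subr_ge0.
by exists i; rewrite hmapE vi0 mulr0 add0r.
Qed.

Lemma hmap_inj_t {v v' t t'} : bdT v -> bdT v' -> t <= 1 -> t' <= 1 ->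
  hmap v t = hmap v' t' -> t = t'.
Proof.
move=> v_bd v'_bd t_le1 t'_le1 vt_v't'.
have [t_min [i ti]] := hmap_min_coord v_bd t_le1.
have [t'_min [i' t'i']] := hmap_min_coord v'_bd t'_le1.
by have := t_min i'; have := t'_min i; rewrite vt_v't' t'i' -vt_v't' ti; lra.
Qed.

Lemma hmap_inj_v {v v' t} : t != 1 -> hmap v t = hmap v' t -> v = v'.
Proof.
move=> t_neq1 /rowP vt_v't; apply/rowP => i.
move: (vt_v't i); rewrite !hmapE => /addIr; apply: mulfI.
by rewrite subr_eq0 eq_sym.
Qed.

Lemma unit_intervalE : @unit_interval R = `[0, 1]%classic.
Proof. by rewrite set_itvcc. Qed.

Lemma hmap_coord_continuous i :
  continuous (fun vt : 'rV[R]_3 * R => hmap vt.1 vt.2 ord0 i).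
Proof.
move=> vt.
have -> : (fun vt : 'rV[R]_3 * R => hmap vt.1 vt.2 ord0 i) =
    fun vt => (1 - vt.2) * vt.1 ord0 i + vt.2 / 3%:R.
  by apply/funext => ?; rewrite hmapE.
have v_i : {for vt, continuous (fun vt : 'rV[R]_3 * R => vt.1 ord0 i)}.
  exact: continuous_comp (fst_continuous vt) (coord_rV3_continuous i vt.1).
have t := snd_continuous vt.
apply: cvgD; last by apply: cvgM => //; exact: cvg_cst.
by apply: cvgM => //; apply: cvgB => //; exact: cvg_cst.
Qed.

Lemma vertex_bdT i : bdT (vertex i).
Proof.
rewrite bdTE; split.
  split=> [j|]; first by rewrite mxE ler0n.
  rewrite (bigD1 i) //= big1 => [|j /negbTE ji]; last by rewrite mxE ji.
  by rewrite mxE eqxx addr0.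
exists (if i == ord0 then lift ord0 ord0 else ord0).
by rewrite mxE; case: ifP => [/eqP ->|/negbT i0]; rewrite // eq_sym (negbTE i0).
Qed.

(* With [m] the least coordinate of [s], take [t = 3 m] and rescale [s - m]
   onto the boundary. *)
Lemma hmap_surj s : simplexT s ->
  exists v t, [/\ bdT v, unit_interval t & hmap v t = s].
Proof.
move=> [s_ge0 s_sum].
have [k _ k_min] := @arg_minP _ _ _ ord0 predT (fun i => s ord0 i) isT.
set m := s ord0 _ in k_min.
have {k_min} m_min i : m <= s ord0 i by apply: k_min.
have m_ge0 : 0 <= m by apply: s_ge0.
have m_s0 := m_min ord0; have m_s1 := m_min (lift ord0 ord0); have m_s2 := m_min ord_max.
rewrite sum_ord3 in s_sum.
have [m_third|m_neq_third] := eqVneq (m * 3%:R) 1.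
  exists (vertex ord0), 1; split; [exact: vertex_bdT|by rewrite /unit_interval /= ler01 lexx|].
  rewrite hmap1; apply/rowP => j; rewrite mxE.
  by case: (ord3P j) => [->|[->|->]]; lra.
pose t := m * 3%:R.
have t_lt1 : 0 < 1 - t by rewrite /t; lra.
exists ((1 - t)^-1 *: (s - t *: const_mx 3%:R^-1)), t.
have vE i : ((1 - t)^-1 *: (s - t *: const_mx 3%:R^-1)) ord0 i = (s ord0 i - m) / (1 - t).
  by rewrite !mxE mulrC /t -mulrA divff ?mulr1 // pnatr_eq0.
split.
- rewrite bdTE; split; last by exists k; rewrite vE subrr mul0r.
  split=> [i|]; first by rewrite vE; apply: divr_ge0; [rewrite subr_ge0|exact: ltW].
  rewrite sum_ord3 !vE -!mulrDl.
  have -> : s ord0 ord0 - m + (s ord0 (lift ord0 ord0) - m) + (s ord0 ord_max - m) = 1 - t.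
    by rewrite /t; lra.
  by rewrite divff ?gt_eqF.
- by rewrite /unit_interval /= /t mulr_ge0 //=; lra.
- by apply/rowP => i; rewrite hmapE vE mulrCA divff ?gt_eqF // mulr1 /t; field.
Qed.

End Simplex.

Section Barycentric.
Context {R : realType} {X : metricType R} {a b c : set X}.
Hypotheses (a_closed : closed a) (b_closed : closed b) (c_closed : closed c).
Hypotheses (a_ne : a !=set0) (b_ne : b !=set0) (c_ne : c !=set0).
Hypothesis abc0 : a `&` b `&` c = set0.
Implicit Types (p : X) (i : 'I_3) (w : X * ('rV[R]_3 * R)).

Definition abc i : set X := if val i == 0%N then a else if val i == 1%N then b else c.

Lemma abc_closed i : closed (abc i).
Proof. by case: (ord3P i) => [->|[->|->]]. Qed.

Lemma abc_ne i : abc i !=set0.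
Proof. by case: (ord3P i) => [->|[->|->]]. Qed.

Definition rho_sum p := rho p a + rho p b + rho p c.

Lemma rho_sum_gt0 p : 0 < rho_sum p.
Proof.
have := rho_ge0 p a; have := rho_ge0 p b; have := rho_ge0 p c.
rewrite lt_neqAle /rho_sum => rc rb ra; rewrite addr_ge0 ?andbT //; last exact: addr_ge0.
apply/eqP => sum0.
suff : (a `&` b `&` c) p by rewrite abc0.
by split; [split|]; apply/rho_eq0 => //; lra.
Qed.

Lemma fmapE p i : fmap a b c p ord0 i = rho p (abc i) / rho_sum p.
Proof.
rewrite mxE /kappa /rho_sum.
by case: (ord3P i) => [->|[->|->]] //=; congr (_ / _); ring.
Qed.

Lemma fmap_simplex p : simplexT (fmap a b c p).
Proof.
split=> [i|]; first by rewrite fmapE divr_ge0 ?rho_ge0 ?ltW ?rho_sum_gt0.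
by rewrite sum_ord3 !fmapE -!mulrDl divff ?gt_eqF ?rho_sum_gt0.
Qed.

Lemma fmap_coord_continuous i : continuous (fun p => fmap a b c p ord0 i).
Proof.
have rho_sum_cont : continuous rho_sum.
  by move=> p; apply: cvgD; [apply: cvgD|]; apply: rho_continuous.
move=> p; rewrite (_ : (fun p => _) = fun p => rho p (abc i) / rho_sum p); last first.
  by apply/funext => ?; rewrite fmapE.
apply: cvgM; first exact: rho_continuous (abc_ne i) p.
by apply: cvgV; [rewrite gt_eqF ?rho_sum_gt0|exact: rho_sum_cont].
Qed.

Lemma fmap_eq0 {p i} : abc i p -> fmap a b c p ord0 i = 0.
Proof. by move=> abc_p; rewrite fmapE (rho_eq0 _ _ (abc_closed i) (abc_ne i)).2 ?mul0r. Qed.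

Lemma closed_Xprime : closed (Xprime a b c).
Proof.
have -> : Xprime a b c =
    (fun w => w.2.1) @^-1` @bdT R `&` (fun w => w.2.2) @^-1` `[0, 1]%classic
    `&` \bigcap_i [set w | hmap w.2.1 w.2.2 ord0 i - fmap a b c w.1 ord0 i = 0].
  apply/seteqP; split=> w.
    move=> [v_bd [t_01 vt_fp]]; split; first by rewrite -unit_intervalE.
    by move=> i _ /=; rewrite vt_fp subrr.
  move=> [[v_bd t_01] vt_fp]; do 2 split => //.
  by apply/rowP => i; apply/eqP; rewrite -subr_eq0; apply/eqP/vt_fp.
apply: closedI; first apply: closedI.
- apply: (@closed_preimage _ _ (fun w => w.2.1) _ _ closed_bdT) => w.
  exact: continuous_comp (snd_continuous w) (fst_continuous _).
- apply: (@closed_preimage _ _ (fun w => w.2.2) _ _ (@itv_closed _ _ _ _)) => w.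
  exact: continuous_comp (snd_continuous w) (snd_continuous _).
- apply: closed_bigI => i _.
  apply: (@closed_preimage _ _ (fun w => _ - _) _ _ (@closed_eq _ 0)) => w.
  apply: cvgB; last exact: continuous_comp (fst_continuous w) (fmap_coord_continuous i _).
  exact: continuous_comp (snd_continuous w) (hmap_coord_continuous i _).
Qed.

Lemma compact_Xprime : compact [set: X] -> compact (Xprime a b c).
Proof.
move=> X_compact; apply: subclosed_compact closed_Xprime _ _.
  exact: compact_setX X_compact (compact_setX compact_bdT (@segment_compact _ 0 1)).
by move=> w [v_bd [t_01 _]]; rewrite -unit_intervalE.
Qed.

Lemma fst_Xprime_surj : fst @` Xprime a b c = setT.
Proof.
apply/seteqP; split=> // p _.
have [v [t [v_bd t_01 vt_fp]]] := hmap_surj _ (fmap_simplex p).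
by exists (p, (v, t)).
Qed.

Lemma Xprime_fibre_lt1 {w} : Xprime a b c w -> w.2.2 < 1 ->
  Xprime a b c `&` fst @^-1` [set w.1] = [set w].
Proof.
case: w => p [v t] [v_bd [/andP [t_ge0 t_le1] vt_fp]] /= t_lt1.
apply/seteqP; split=> [[p' [v' t']]|_ ->]; last first.
  by split=> //; split=> //; split=> //; apply/andP.
move=> [[v'_bd [/andP [_ t'_le1] vt'_fp]] /= p'p]; subst p'.
have t't : t' = t by apply: hmap_inj_t v'_bd v_bd t'_le1 t_le1 _; rewrite vt'_fp vt_fp.
rewrite t't in vt'_fp *.
by congr (_, (_, _)); apply: (hmap_inj_v (negbT (lt_eqF t_lt1))); rewrite vt'_fp vt_fp.
Qed.

Lemma Xprime_fibre_eq1 {p v} : Xprime a b c (p, (v, 1)) ->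
  Xprime a b c `&` fst @^-1` [set p] = [set (p, (v', 1)) | v' in @bdT R].
Proof.
move=> [v_bd [_ v1_fp]]; apply/seteqP; split=> [[p' [v' t']]|_ [v' v'_bd <-]].
  move=> [[v'_bd [/andP [_ t'_le1] vt'_fp]] /= p'p]; subst p'.
  have -> : t' = 1.
    by apply: (hmap_inj_t v'_bd v_bd t'_le1 (lexx _)); rewrite vt'_fp v1_fp.
  by exists v'.
split=> //; split=> //; split; first by rewrite /unit_interval /= ler01 lexx.
by rewrite /= hmap1 -v1_fp hmap1.
Qed.

Lemma connected_Xprime_fibre p : connected (Xprime a b c `&` fst @^-1` [set p]).
Proof.
have [[p' [v t]] X'w /= p'p] : (fst @` Xprime a b c) p by rewrite fst_Xprime_surj.
subst p'; have [t1|t_neq1] := eqVneq t 1.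
  rewrite t1 in X'w; rewrite (Xprime_fibre_eq1 X'w).
  apply: connected_continuous_connected connected_bdT _.
  apply: continuous_subspaceT; apply: continuous_pair; first exact: cst_continuous.
  apply: (@continuous_pair _ _ _ (fun v => v) (fun=> (1 : R))).
    by move=> ?; exact: cvg_id.
  exact: cst_continuous.
have [_ [/andP [_ t_le1] _]] := X'w.
have t_lt1 : t < 1 by rewrite lt_neqAle t_neq1.
by rewrite (Xprime_fibre_lt1 X'w t_lt1); apply: connected1.
Qed.

Lemma Xprime_side w i : Xprime a b c w -> fmap a b c w.1 ord0 i = 0 -> side i w.2.1.
Proof.
case: w => p [v t] [v_bd [/andP [t_ge0 t_le1] vt_fp]] /= fpi0.
rewrite /= in t_ge0 vt_fp; move: v_bd; rewrite /= bdTE => -[v_simplex _]; split=> //.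
move/rowP/(_ i): vt_fp; rewrite hmapE fpi0 => vti0.
have vi_ge0 : 0 <= (1 - t) * v ord0 i by rewrite mulr_ge0 ?subr_ge0 ?v_simplex.1.
have t0 : t = 0 by lra.
by move: vti0; rewrite t0 subr0 mul1r mul0r addr0.
Qed.

Lemma Xside_disjoint :
  Xside a b c ord0 `&` Xside a b c (lift ord0 ord0) `&` Xside a b c ord_max = set0.
Proof.
apply/seteqP; split=> // w [[[_ s0] [_ s1]] [_ s2]].
suff : (side ord0 `&` side (lift ord0 ord0) `&` side ord_max) w.2.1.
  by rewrite sides_disjoint.
by split; first split.
Qed.

Lemma Xside_cover :
  Xside a b c ord0 `|` Xside a b c (lift ord0 ord0) `|` Xside a b c ord_max = Xprime a b c.
Proof.
apply/seteqP; split=> [w [[[X'w _]|[X'w _]]|[X'w _]] //|w X'w].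
have := X'w.1; rewrite bdT_sides => -[[s0|s1]|s2].
- by left; left.
- by left; right.
- by right.
Qed.

End Barycentric.

Theorem mainTheorem6 (R : realType) (X : metricType R)
  (X_compact : compact [set: X]) (X_connected : connected [set: X])
  (X_nonempty : [set: X] !=set0)
  (rho_le1 : forall x y : X, mdist x y <= 1)
  (a b c : set X)
  (a_closed : closed a) (b_closed : closed b) (c_closed : closed c)
  (a_ne : a !=set0) (b_ne : b !=set0) (c_ne : c !=set0)
  (abc0 : a `&` b `&` c = set0) :
  let X' := Xprime a b c in
  let q := @fst X ('rV[R]_3 * R) in
  let x := Xside a b c ord0 in
  let y := Xside a b c (lift ord0 ord0) in
  let z := Xside a b c ord_max in
  [/\ X' !=set0, compact X' & connected X'] /\
  [/\ {within X', continuous q},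
      (forall G, closed G -> closed (q @` (X' `&` G))),
      (forall p : X, connected (X' `&` q @^-1` [set p]))
    & q @` X' = [set: X]] /\
  [/\ X' `&` q @^-1` a `<=` x, X' `&` q @^-1` b `<=` y,
      X' `&` q @^-1` c `<=` z, x `&` y `&` z = set0
    & x `|` y `|` z = X'].
Proof.
move=> X' q x y z.
have X'_compact : compact X'.
  exact: compact_Xprime a_closed b_closed c_closed a_ne b_ne c_ne abc0 X_compact.
have q_surj : q @` X' = setT := fst_Xprime_surj a_closed b_closed c_closed a_ne b_ne c_ne abc0.
have q_closed := closed_image_compact (@metric_hausdorff _ _) X'_compact fst_continuous.
have q_fibre p : connected (X' `&` q @^-1` [set p]).
  exact: connected_Xprime_fibre a_closed b_closed c_closed a_ne b_ne c_ne abc0 p.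
have X'_ne : X' !=set0.
  have [p _] := X_nonempty; have : (q @` X') p by rewrite q_surj.
  by case=> w X'w _; exists w.
have q_side i : X' `&` q @^-1` (@abc R X a b c i) `<=` Xside a b c i.
  move=> w [X'w abc_w]; split=> //; apply: Xprime_side X'w _.
  exact: (fmap_eq0 a_closed b_closed c_closed a_ne b_ne c_ne (abc_w : abc i w.1)).
split.
  by split=> //; exact: closed_monotone_connected q_closed q_surj X_connected q_fibre.
split; first by split=> //; exact: continuous_subspaceT fst_continuous.
split; [exact: q_side ord0|exact: q_side (lift ord0 ord0)|exact: q_side ord_max|..].
- exact: Xside_disjoint.
- exact: Xside_cover.
Qed.
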